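(* For every formula $A$ of $\mathsf{LTL}^{\ll}$, every model $\sigma$ and every $i \in \mathbb{N}$: $\sigma, i \models \top \sim A$ if and only if $\sigma, i \models \Diamond\Box A$. That is, the formula $\top \sim A$ is equivalent to the formula $\Diamond \Box A$.
   Context: Fix a set $\mathsf{Prop}$ of atomic propositions. Formulas of $\mathsf{LTL}^{\ll}$ are built from atomic propositions $P \in \mathsf{Prop}$ by $\lnot A$, $A \land B$, $\mathsf{X} A$, $A \mathbin{\mathsf{U}} B$ and $A \ll B$; $\lor$ is defined from $\lnot,\land$ as usual. Set $\top := P \lor \lnot P$ for a fixed $P \in \mathsf{Prop}$, $\Diamond B := \top \mathbin{\mathsf{U}} B$, $\Box B := \lnot \Diamond \lnot B$, and $A \sim B := \lnot(A \ll B) \land \lnot(B \ll A)$. A model $\sigma$ is an $\omega$-word $\sigma_0\sigma_1\sigma_2\ldots$ over the alphabet $2^{\mathsf{Prop}}$. Satisfaction is defined by: $\sigma,i \models P$ iff $P \in \sigma_i$; $\sigma,i\models \lnot A$ iff not $\sigma,i\models A$; $\sigma,i\models A\land B$ iff both hold; $\sigma,i\models \mathsf{X}A$ iff $\sigma,i+1\models A$; $\sigma,i\models A\mathbin{\mathsf{U}}B$ iff there is $j\ge i$ with $\sigma,j\models B$ and $\sigma,k\models A$ for all $i\le k<j$; $\sigma,i\models A\ll B$ iff for every $b$ there exists $j$ with $\mathrm{card}(A_\sigma^{i,j}) + b \le \mathrm{card}(B_\sigma^{i,j})$, where $A_\sigma^{i,j} := \{k \in \mathbb{N} : i \le k \le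 j,\ \sigma,k\models A\}$ (quantifiers over $b$ and $j$ range over natural numbers). *)

From Stdlib Require Import Arith ClassicalEpsilon.

Inductive formula (AP : Type) : Type :=
| Atom : AP -> formula AP
| Not : formula AP -> formula AP
| And : formula AP -> formula AP -> formula AP
| Next : formula AP -> formula AP
| Until : formula AP -> formula AP -> formula AP
| LL : formula AP -> formula AP -> formula AP.

Arguments Atom {AP}. Arguments Not {AP}. Arguments And {AP}.
Arguments Next {AP}. Arguments Until {AP}. Arguments LL {AP}.

(* A model: an omega-word over 2^AP, position i gives the set of true atoms. *)
Definition model (AP : Type) := nat -> AP -> Prop.

Definition Or {AP} (A B : formula AP) : formula AP := Not (And (Not A) (Not B)).
Definition Top {AP} (p : AP) : formula AP := Or (Atom p) (Not (Atom p)).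
Definition Diamond {AP} (p : AP) (B : formula AP) : formula AP := Until (Top p) B.
Definition Box {AP} (p : AP) (B : formula AP) : formula AP := Not (Diamond p (Not B)).
Definition Sim {AP} (A B : formula AP) : formula AP := And (Not (LL A B)) (Not (LL B A)).

Definition ind (P : Prop) : nat :=
  if excluded_middle_informative P then 1 else 0.

(* card {k | i <= k <= j, Q k}: number of k in [i, i+m] with Q k, where j = i + m;
   for j < i the set is empty. *)
Fixpoint count_from (Q : nat -> Prop) (i m : nat) : nat :=
  match m with
  | 0 => ind (Q i)
  | S m' => count_from Q i m' + ind (Q (i + S m'))
  end.

Definition card_between (Q : nat -> Prop) (i j : nat) : nat :=
  if j <? i then 0 else count_from Q i (j - i).

Fixpoint sat {AP} (s : model AP) (i : nat) (f : formula AP) : Prop :=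
  match f with
  | Atom p => s i p
  | Not A => ~ sat s i A
  | And A B => sat s i A /\ sat s i B
  | Next A => sat s (S i) A
  | Until A B => exists j, i <= j /\ sat s j B /\ (forall k, i <= k < j -> sat s k A)
  | LL A B => forall b : nat, exists j : nat,
      card_between (fun k => sat s k A) i j + b <= card_between (fun k => sat s k B) i j
  end.

(* Since ⊤ holds everywhere, the number of ⊤-positions in [i, j] is the number
   of A-positions plus the number of ¬A-positions.  Hence ⊤ ≪ A never holds,
   and A ≪ ⊤ holds iff the count of ¬A-positions is unbounded, i.e. iff ¬A
   holds infinitely often.  So ⊤ ∼ A says that A holds from some point on,
   which is ◇□A. *)
From Stdlib Require Import Arith Lia Classical ClassicalEpsilon.

Lemma ind_true (P : Prop) : P -> ind P = 1.
Proof. unfold ind; destruct (excluded_middle_informative P); tauto. Qed.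

Lemma ind_false (P : Prop) : ~ P -> ind P = 0.
Proof. unfold ind; destruct (excluded_middle_informative P); tauto. Qed.

Lemma ind_compl (P : Prop) : ind P + ind (~ P) = 1.
Proof.
  unfold ind; destruct (excluded_middle_informative P);
    destruct (excluded_middle_informative (~ P)); tauto || lia.
Qed.

Lemma not_infinitely_often (Q : nat -> Prop) :
  ~ (forall n, exists k, n <= k /\ Q k) -> exists n, forall k, n <= k -> ~ Q k.
Proof.
  intros Hinf; apply NNPP; intros Hev; apply Hinf; intros n.
  apply NNPP; intros Hn; apply Hev; exists n; intros k Hk HQ.
  apply Hn; exists k; auto.
Qed.

Section CardBetween.

Variable Q : nat -> Prop.

Lemma card_between_before i j : j < i -> card_between Q i j = 0.
Proof. intros Hji; unfold card_between; apply Nat.ltb_lt in Hji; now rewrite Hji. Qed.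

Lemma card_between_first i : card_between Q i i = ind (Q i).
Proof. unfold card_between; now rewrite Nat.ltb_irrefl, Nat.sub_diag. Qed.

Lemma card_between_succ i j :
  i <= j -> card_between Q i (S j) = card_between Q i j + ind (Q (S j)).
Proof.
  intros Hij; unfold card_between.
  replace (S j <? i) with false by (symmetry; apply Nat.ltb_ge; lia).
  replace (j <? i) with false by (symmetry; apply Nat.ltb_ge; lia).
  replace (S j - i) with (S (j - i)) by lia; cbn [count_from].
  now replace (i + S (j - i)) with (S j) by lia.
Qed.

Lemma card_between_mono i j j' : j <= j' -> card_between Q i j <= card_between Q i j'.
Proof.
  induction 1 as [|j' _ IH]; [lia|].
  destruct (Nat.lt_ge_cases j' i) as [Hj'i | Hij'].
  - rewrite (card_between_before i j') in IH by lia; lia.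
  - rewrite card_between_succ by lia; lia.
Qed.

Lemma card_between_lt i j k :
  i <= k -> j < k -> Q k -> card_between Q i j < card_between Q i k.
Proof.
  intros Hik Hjk HQ; destruct k as [|k]; [lia|].
  destruct (Nat.lt_ge_cases k i) as [Hki | Hik'].
  - rewrite card_between_before by lia.
    replace i with (S k) by lia; rewrite card_between_first, ind_true by auto; lia.
  - rewrite card_between_succ, ind_true by auto.
    pose proof (card_between_mono i j k ltac:(lia)); lia.
Qed.

Lemma card_between_stable i j n :
  (forall k, n < k -> ~ Q k) -> card_between Q i j <= card_between Q i n.
Proof.
  intros Hvanish; induction j as [|j IH].
  - apply card_between_mono; lia.
  - destruct (Nat.le_gt_cases (S j) n); [now apply card_between_mono|].
    destruct (Nat.lt_ge_cases j i).
    + destruct (Nat.eq_dec (S j) i) as [<- | Hne].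
      * rewrite card_between_first, ind_false by auto; lia.
      * rewrite card_between_before by lia; lia.
    + rewrite card_between_succ, ind_false by auto; lia.
Qed.

Lemma card_between_unbounded_iff i :
  (forall b, exists j, b <= card_between Q i j) <-> (forall n, exists k, n <= k /\ Q k).
Proof.
  split.
  - intros Hunb; apply NNPP; intros Hfin.
    destruct (not_infinitely_often Q Hfin) as [n Hn].
    destruct (Hunb (S (card_between Q i n))) as [j Hj].
    pose proof (card_between_stable i j n (fun k Hk => Hn k (Nat.lt_le_incl _ _ Hk))).
    lia.
  - intros Hinf b; induction b as [|b [j Hj]]; [exists i; lia|].
    destruct (Hinf (S (Nat.max i j))) as [k [Hk HQ]].
    exists k; pose proof (card_between_lt i j k ltac:(lia) ltac:(lia) HQ); lia.
Qed.

End CardBetween.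

Lemma card_between_compl (T Q : nat -> Prop) i j : (forall k, T k) ->
  card_between T i j = card_between Q i j + card_between (fun k => ~ Q k) i j.
Proof.
  intros HT.
  induction j as [|j IH].
  - destruct (Nat.eq_dec i 0) as [-> |].
    + rewrite !card_between_first, ind_true by auto; symmetry; apply ind_compl.
    + rewrite !card_between_before by lia; reflexivity.
  - destruct (Nat.lt_trichotomy (S j) i) as [| [<- |]].
    + rewrite !card_between_before by lia; reflexivity.
    + rewrite !card_between_first, ind_true by auto; symmetry; apply ind_compl.
    + rewrite !card_between_succ, IH, ind_true by (auto || lia).
      pose proof (ind_compl (Q (S j))); lia.
Qed.

Section Semantics.

Variables (AP : Type) (p : AP) (s : model AP).

Lemma sat_Top k : sat s k (Top p).
Proof. simpl; tauto. Qed.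

Lemma sat_Diamond i B : sat s i (Diamond p B) <-> exists j, i <= j /\ sat s j B.
Proof.
  simpl; split.
  - intros [j [Hij [HB _]]]; eauto.
  - intros [j [Hij HB]]; exists j; repeat split; auto; intros; tauto.
Qed.

Lemma sat_Box i B : sat s i (Box p B) <-> forall j, i <= j -> sat s j B.
Proof.
  unfold Box; cbn [sat]; rewrite sat_Diamond; split.
  - intros Hnot j Hij; apply NNPP; intros HnB; apply Hnot; exists j; split; assumption.
  - intros HB [j [Hij HnB]]; exact (HnB (HB j Hij)).
Qed.

Lemma sat_Sim i A B :
  sat s i (Sim A B) <-> ~ sat s i (LL A B) /\ ~ sat s i (LL B A).
Proof. exact (iff_refl _). Qed.

Lemma sat_LL i A B :
  sat s i (LL A B) <-> forall b, exists j,
    card_between (fun k => sat s k A) i j + b <= card_between (fun k => sat s k B) i j.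
Proof. exact (iff_refl _). Qed.

Lemma card_between_Top A i j :
  card_between (fun k => sat s k (Top p)) i j
  = card_between (fun k => sat s k A) i j + card_between (fun k => ~ sat s k A) i j.
Proof. apply card_between_compl, sat_Top. Qed.

Lemma not_sat_LL_Top A i : ~ sat s i (LL (Top p) A).
Proof.
  rewrite sat_LL; intros HLL; destruct (HLL 1) as [j Hj].
  rewrite card_between_Top with (A := A) in Hj; lia.
Qed.

Lemma sat_LL_Top A i :
  sat s i (LL A (Top p)) <-> forall n, exists k, n <= k /\ ~ sat s k A.
Proof.
  rewrite sat_LL, <- card_between_unbounded_iff with (i := i).
  split; intros H b; destruct (H b) as [j Hj]; exists j;
    rewrite card_between_Top with (A := A) in *; lia.
Qed.

End Semantics.

Theorem mainTheorem1 (AP : Type) (p : AP) (A : formula AP) (s : model AP) (i : nat) :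
  sat s i (Sim (Top p) A) <-> sat s i (Diamond p (Box p A)).
Proof.
  rewrite sat_Sim, sat_LL_Top, sat_Diamond; split.
  - intros [_ Hfin]; destruct (not_infinitely_often _ Hfin) as [n Hn].
    exists (Nat.max i n); split; [lia|].
    rewrite sat_Box; intros k Hk; apply NNPP, Hn; lia.
  - intros [j [_ HB]]; rewrite sat_Box in HB.
    split; [apply not_sat_LL_Top|].
    intros Hinf; destruct (Hinf j) as [k [Hk HnA]]; auto.
Qed.
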